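(* Let $1\le m<k$ and let $G$ be a complete $k$-partite graph in which exactly $m$ partite sets have cardinality $1$ and the remaining $k-m$ partite sets have cardinality at least $2$. Then $\rho_T(G)=k-m$.
   Context: Graphs are finite and simple. A complete $k$-partite graph is one whose vertex set is partitioned into $k$ nonempty independent sets (partite sets) such that two vertices are adjacent iff they lie in different partite sets. For $u,v\in(\mathbb{R}\cup\{\infty\})^k$ the min-plus tropical dot product is $u\odot v=\min_i(u_i+v_i)$. A min-plus $k$-tropical dot product representation of $G=(V,E)$ is a map $f:V\to(\mathbb{R}\cup\{\infty\})^k$ with a threshold $t>0$ such that for all distinct $x,y\in V$: $xy\in E$ iff $f(x)\odot f(y)\ge t$. $\rho_T(G)$ is the least $k\ge 1$ for which such a representation exists. *)

From Stdlib Require Import Reals.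
From mathcomp Require Import all_boot.
Set Implicit Arguments. Unset Strict Implicit. Unset Printing Implicit Defensive.

(* Extended reals R ∪ {∞}: [Some r] = r, [None] = ∞. *)
Definition xR := option R.

Definition xadd (a b : xR) : xR :=
  match a, b with Some x, Some y => Some (Rplus x y) | _, _ => None end.

Definition xmin (a b : xR) : xR :=
  match a, b with
  | Some x, Some y => Some (Rmin x y)
  | None, _ => b
  | _, None => a
  end.

Definition xge (a : xR) (t : R) : Prop :=
  match a with None => True | Some x => Rle t x end.

Definition tdot (k : nat) (u v : 'I_k -> xR) : xR :=
  \big[xmin/None]_(i < k) xadd (u i) (v i).

Definition trop_rep (T : finType) (e : rel T) (k : nat)
    (f : T -> 'I_k -> xR) (t : R) : Prop :=
  Rlt 0 t /\ forall x y : T, x != y -> (e x y <-> xge (tdot (f x) (f y)) t).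

Definition trop_representable (T : finType) (e : rel T) (k : nat) : Prop :=
  exists (f : T -> 'I_k -> xR) (t : R), trop_rep e f t.

Definition is_rhoT (T : finType) (e : rel T) (n : nat) : Prop :=
  (1 <= n)%N /\ trop_representable e n /\
  forall d : nat, (1 <= d)%N -> (d < n)%N -> ~ trop_representable e d.

Definition complete_multipartite_on (T : finType) (e : rel T) (P : {set {set T}}) : Prop :=
  partition P [set: T] /\
  forall x y : T, x != y -> e x y = (pblock P x != pblock P y).

From Stdlib Require Import Reals Lra Classical.
From mathcomp Require Import all_boot.

Set Implicit Arguments.
Unset Strict Implicit.
Unset Printing Implicit Defensive.

(* A non-edge {a, b} forces a coordinate i in which f a i and f b i are
   finite with sum below the threshold t.  Two distinct partite sets of size
   at least 2 cannot share such a coordinate: for non-edges {a, b} and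
   {a', b'} there, the cross pairs {a, b'} and {b, a'} are edges, yet their
   sums in that coordinate add up to the same total as those of the two
   non-edges, below 2t.  Conversely, giving each partite set of size at
   least 2 its own coordinate with value 0, and infinity everywhere else,
   represents the graph with threshold 1. *)

Lemma xge_xmin (a b : xR) t : xge (xmin a b) t <-> xge a t /\ xge b t.
Proof.
case: a => [x|]; case: b => [y|] /=; try tauto.
split => [H | [Hx Hy]]; last exact: Rmin_glb.
by split; apply: Rle_trans H _; [apply: Rmin_l | apply: Rmin_r].
Qed.

Lemma xge_bigmin (I : eqType) (r : seq I) (F : I -> xR) t :
  xge (\big[xmin/None]_(i <- r) F i) t <-> forall i, i \in r -> xge (F i) t.
Proof.
elim: r => [|a r IH]; first by rewrite big_nil; split => // _ i; rewrite in_nil.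
rewrite big_cons xge_xmin IH; split => [[Ha Hr] i | H].
  by rewrite in_cons => /orP[/eqP -> | /Hr].
by split => [|i ri]; apply: H; rewrite in_cons ?eqxx ?ri ?orbT.
Qed.

Lemma xge_tdot k (u v : 'I_k -> xR) t :
  xge (tdot u v) t <-> forall i, xge (xadd (u i) (v i)) t.
Proof.
rewrite /tdot xge_bigmin.
by split => H i; [apply: H; exact: mem_index_enum | move=> _; exact: H].
Qed.

Lemma xadd_exchange (u v u' v' : xR) t :
  ~ xge (xadd u v) t -> ~ xge (xadd u' v') t ->
  xge (xadd u v') t -> ~ xge (xadd v u') t.
Proof.
case: u => [x|] //; case: v => [y|] //; case: u' => [x'|] //;
  case: v' => [y'|] //= /Rnot_le_lt ? /Rnot_le_lt ? ? ?; lra.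
Qed.

Lemma complete_multipartite_adj (T : finType) (e : rel T) P A B x y :
  complete_multipartite_on e P -> A \in P -> B \in P -> x \in A -> y \in B ->
  x != y -> e x y = (A != B).
Proof.
move=> [/and3P[_ trivP _] eP] AP BP xA yB xy.
by rewrite eP // (def_pblock trivP AP xA) (def_pblock trivP BP yB).
Qed.

Section LowerBound.

Variables (T : finType) (e : rel T) (P : {set {set T}}) (d : nat).
Variables (f : T -> 'I_d -> xR) (t : R).

Definition deficient_coord (A : {set T}) (i : 'I_d) :=
  exists a b, [/\ a \in A, b \in A & ~ xge (xadd (f a i) (f b i)) t].

Hypothesis cmpP : complete_multipartite_on e P.
Hypothesis repf : trop_rep e f t.

Lemma large_block_deficient_coord A :
  A \in P -> 1 < #|A| -> exists i, deficient_coord A i.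
Proof.
move=> AP /card_gt1P[a [b [aA bA ab]]].
have nab : ~~ e a b by rewrite (complete_multipartite_adj cmpP AP AP) ?eqxx.
have [i Hi] : exists i, ~ xge (xadd (f a i) (f b i)) t.
  apply: not_all_ex_not => /xge_tdot /(proj2 repf a b ab) eab.
  by rewrite eab in nab.
by exists i, a, b.
Qed.

Lemma deficient_coord_inj A B i :
  A \in P -> B \in P -> deficient_coord A i -> deficient_coord B i -> A = B.
Proof.
move=> AP BP [a [b [aA bA Hab]]] [a' [b' [a'B b'B Ha'b']]].
apply/eqP; apply: contraT => AB.
have cross x y : x \in A -> y \in B -> xge (xadd (f x i) (f y i)) t.
  move=> xA yB; have xy : x != y.
    apply: contraNneq AB => xy; rewrite -xy in yB.
    have trivP : trivIset P by case/and3P: cmpP.1.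
    by rewrite -(def_pblock trivP AP xA) (def_pblock trivP BP yB).
  have : e x y by rewrite (complete_multipartite_adj cmpP AP BP).
  by move/(proj2 repf x y xy)/xge_tdot; apply.
by case: (xadd_exchange Hab Ha'b' (cross _ _ aA b'B) (cross _ _ bA a'B)).
Qed.

End LowerBound.

Lemma trop_representable_card_large_blocks (T : finType) (e : rel T)
    (P Q : {set {set T}}) (d : nat) :
  complete_multipartite_on e P -> Q \subset P ->
  {in Q, forall A : {set T}, 1 < #|A|} ->
  trop_representable e d -> #|Q| <= d.
Proof.
move=> cmpP sQP Q_large [f [t repf]].
have [->|[A0 A0Q]] := set_0Vmem Q; first by rewrite cards0.
have QP A : A \in Q -> A \in P by move/(subsetP sQP).
have coord A : A \in Q -> exists i, deficient_coord f t A i.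
  move=> AQ; exact: (large_block_deficient_coord cmpP repf (QP A AQ) (Q_large A AQ)).
have [i0 _] := coord A0 A0Q.
have [h hP] : exists h : {set T} -> 'I_d, {in Q, forall A, deficient_coord f t A (h A)}.
  apply: (fin_all_exists (P := fun A i => A \in Q -> deficient_coord f t A i)) => A.
  by have [/coord[i Hi] | AQ] := boolP (A \in Q); [exists i | exists i0].
have h_inj : {in Q &, injective h}.
  move=> A B AQ BQ hAB.
  apply: (deficient_coord_inj cmpP repf (QP A AQ) (QP B BQ) (hP A AQ)).
  by rewrite hAB; exact: hP.
by rewrite -(card_in_imset h_inj) (leq_trans (max_card _)) ?card_ord.
Qed.

Lemma exists_in_inj_ord (T : finType) (A : {pred T}) d :
  0 < d -> #|A| <= d -> exists g : T -> 'I_d, {in A &, injective g}.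
Proof.
case: d => // d _ leAd; exists (fun x => inord (index x (enum A))).
have index_lt x : x \in A -> index x (enum A) < d.+1.
  by move=> xA; rewrite (leq_trans _ leAd) // cardE index_mem mem_enum.
move=> x y xA yA /(congr1 val); rewrite /= !inordK ?index_lt //.
by move/(congr1 (nth x (enum A))); rewrite !nth_index ?mem_enum.
Qed.

Lemma trop_representable_blocks (T : finType) (e : rel T)
    (P Q : {set {set T}}) (d : nat) :
  complete_multipartite_on e P ->
  {in P, forall A : {set T}, 1 < #|A| -> A \in Q} ->
  0 < d -> #|Q| <= d -> trop_representable e d.
Proof.
move=> [partP eP] Q_large d_gt0 leQd.
have [g g_inj] := exists_in_inj_ord d_gt0 leQd.
have coverP x : x \in cover P by case/and3P: partP => /eqP ->; rewrite inE.
pose f (x : T) (i : 'I_d) : xR :=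
  if (pblock P x \in Q) && (g (pblock P x) == i) then Some R0 else None.
exists f, R1; split => [|x y xy]; first exact: Rlt_0_1.
rewrite eP //; split => [bxy | /xge_tdot fxy].
  apply/xge_tdot => i; rewrite /f.
  case: ifP => [/andP[xQ /eqP gx] | _] //; case: ifP => [/andP[yQ /eqP gy] | _] //.
  by move: bxy; rewrite (g_inj _ _ xQ yQ (etrans gx (esym gy))) eqxx.
apply/negP => /eqP bxy.
have xQ : pblock P x \in Q.
  apply: Q_large; first exact: pblock_mem.
  by apply/card_gt1P; exists x, y; rewrite {2}bxy !mem_pblock !coverP.
by move: (fxy (g (pblock P x))); rewrite /f -bxy xQ eqxx /=; lra.
Qed.

Theorem mainTheorem15 (T : finType) (e : rel T)
    (e_sym : symmetric e) (e_irr : irreflexive e)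
    (k m : nat) (P : {set {set T}}) :
  (1 <= m)%N -> (m < k)%N ->
  complete_multipartite_on e P ->
  #|P| = k ->
  #|[set A in P | #|A| == 1%N]| = m ->
  (forall A, A \in P -> #|A| != 1%N -> (2 <= #|A|)%N) ->
  is_rhoT e (k - m).
Proof.
move=> m_gt0 mk cmpP cardP cardS P_large.
pose Q := [set A in P | #|A| != 1].
have cardQ : #|Q| = k - m.
  rewrite -cardP -cardS.
  have -> : [set A in P | #|A| == 1] = P :&: [set A : {set T} | #|A| == 1].
    by apply/setP => A; rewrite !inE.
  rewrite -(cardsID [set A : {set T} | #|A| == 1] P) addKn.
  by apply: eq_card => A; rewrite !inE andbC.
have Q_large : {in Q, forall A : {set T}, 1 < #|A|}.
  by move=> A; rewrite inE => /andP[]; exact: P_large.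
split; first by rewrite subn_gt0.
split.
  apply: (trop_representable_blocks (Q := Q)) cmpP _ _ _; last by rewrite cardQ.
  - by move=> A AP A_gt1; rewrite inE AP neq_ltn A_gt1 orbT.
  - by rewrite subn_gt0.
have sQP : Q \subset P by apply/subsetP => A; rewrite inE => /andP[].
move=> d _ lt_d /(trop_representable_card_large_blocks cmpP sQP Q_large).
by rewrite cardQ leqNgt lt_d.
Qed.
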